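(* Let datasets be finite multisets $D=\{(x_i,y_i)\}_{i=1}^n$ of records with $x_i,y_i\in[0,1]$. Define $g(D)=(S_{xy}(D),\,S_{(1-x)y}(D),\,S_{1-y}(D))\in\mathbb{R}^3$, where $S_{xy}(D)=\sum_{i=1}^n x_iy_i$, $S_{(1-x)y}(D)=\sum_{i=1}^n (1-x_i)y_i$ and $S_{1-y}(D)=\sum_{i=1}^n (1-y_i)$. Then the global $\ell_1$-sensitivity of $g$ under the add/remove neighboring relation equals $1$, i.e. $\Delta_1(g):=\sup_{D\sim D'}\|g(D)-g(D')\|_1=1$.
   Context: Two datasets $D$ and $D'$ are neighboring, written $D\sim D'$, if one is obtained from the other by adding or removing a single record $(x^*,y^* )\in[0,1]^2$ (add/remove or unbounded model). $\|\cdot\|_1$ is the $\ell_1$-norm on $\mathbb{R}^3$. *)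

From Stdlib Require Import Reals Lra List Permutation.
Open Scope R_scope.

Definition record := (R * R)%type.
Definition in01 (r : R) : Prop := 0 <= r <= 1.
Definition valid_record (p : record) : Prop := in01 (fst p) /\ in01 (snd p).
(* A dataset: a finite multiset of records in [0,1]^2, represented as a list. *)
Definition dataset := list record.
Definition valid_dataset (D : dataset) : Prop := Forall valid_record D.

Definition S_xy (D : dataset) : R := fold_right (fun p acc => fst p * snd p + acc) 0 D.
Definition S_1mx_y (D : dataset) : R := fold_right (fun p acc => (1 - fst p) * snd p + acc) 0 D.
Definition S_1my (D : dataset) : R := fold_right (fun p acc => (1 - snd p) + acc) 0 D.

Definition g (D : dataset) : R * R * R := (S_xy D, S_1mx_y D, S_1my D).

Definition l1_dist (u v : R * R * R) : R :=
  Rabs (fst (fst u) - fst (fst v)) + Rabs (snd (fst u) - snd (fst v)) + Rabs (snd u - snd v).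

Definition neighbors (D D' : dataset) : Prop :=
  exists r : record, valid_record r /\
    (Permutation D' (r :: D) \/ Permutation D (r :: D')).

Definition sensitivity_values (f : dataset -> R * R * R) (v : R) : Prop :=
  exists D D', valid_dataset D /\ valid_dataset D' /\ neighbors D D' /\
    v = l1_dist (f D) (f D').

From Stdlib Require Import Reals Lra List Permutation.
Open Scope R_scope.

(* A record (x, y) contributes x y, (1 - x) y and 1 - y to the three
   coordinates of g: three nonnegative numbers summing to 1.  Adding or
   removing it therefore moves g by exactly 1 in the l1-norm, so every
   neighbouring pair attains the value 1 and the supremum is 1. *)

Definition sum_by (h : record -> R) (D : dataset) : R :=
  fold_right (fun p acc => h p + acc) 0 D.

Lemma sum_by_perm (h : record -> R) (D D' : dataset) :
  Permutation D D' -> sum_by h D = sum_by h D'.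
Proof. unfold sum_by; induction 1; simpl; lra. Qed.

Lemma g_perm (D D' : dataset) : Permutation D D' -> g D = g D'.
Proof.
  intros HP; unfold g.
  change S_xy with (sum_by (fun p => fst p * snd p)).
  change S_1mx_y with (sum_by (fun p => (1 - fst p) * snd p)).
  change S_1my with (sum_by (fun p => 1 - snd p)).
  now rewrite !(sum_by_perm _ _ _ HP).
Qed.

Lemma Rabs_sub_add_l (a c : R) : 0 <= c -> Rabs (a - (c + a)) = c.
Proof.
  intros Hc; replace (a - (c + a)) with (- c) by ring.
  rewrite Rabs_Ropp; apply Rabs_right; lra.
Qed.

Lemma l1_dist_sym (u v : R * R * R) : l1_dist u v = l1_dist v u.
Proof.
  unfold l1_dist.
  rewrite (Rabs_minus_sym (fst (fst u))), (Rabs_minus_sym (snd (fst u))),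
    (Rabs_minus_sym (snd u)).
  reflexivity.
Qed.

Lemma l1_dist_add_record (r : record) (D : dataset) :
  valid_record r -> l1_dist (g D) (g (r :: D)) = 1.
Proof.
  destruct r as [x y]; intros [[Hx0 Hx1] [Hy0 Hy1]]; simpl in *.
  unfold l1_dist, g, S_xy, S_1mx_y, S_1my; simpl.
  rewrite !Rabs_sub_add_l by nra; ring.
Qed.

Lemma neighbors_l1_dist (D D' : dataset) :
  neighbors D D' -> l1_dist (g D) (g D') = 1.
Proof.
  intros [r [Hr [HP | HP]]]; rewrite (g_perm _ _ HP).
  - now apply l1_dist_add_record.
  - rewrite l1_dist_sym; now apply l1_dist_add_record.
Qed.

Lemma sensitivity_values_one : sensitivity_values g 1.
Proof.
  assert (H00 : valid_record (0, 0)) by (unfold valid_record, in01; simpl; lra).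
  assert (Hnb : neighbors nil ((0, 0) :: nil))
    by (exists (0, 0); split; [exact H00 | left; apply Permutation_refl]).
  exists nil, ((0, 0) :: nil).
  split; [constructor |].
  split; [constructor; [exact H00 | constructor] |].
  split; [exact Hnb |].
  symmetry; now apply neighbors_l1_dist.
Qed.

Theorem mainTheorem2 : is_lub (sensitivity_values g) 1.
Proof.
  split.
  - intros v [D [D' [_ [_ [HN ->]]]]].
    rewrite (neighbors_l1_dist _ _ HN); apply Rle_refl.
  - intros b Hb; exact (Hb 1 sensitivity_values_one).
Qed.
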